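(* Let $p\ge 7$ be a prime. Then $$\sum_{k=1}^{p-1}\frac{H_k^2}{k^2}\equiv -\sum_{1\le i<j<k\le p-1}\frac{1}{ij^2k}\pmod{p}.$$
   Context: $H_n=\sum_{k=1}^n 1/k$. Congruences modulo $p$ are taken in the ring of rationals with denominators not divisible by $p$. *)

From mathcomp Require Import all_boot all_order all_algebra.
Set Implicit Arguments. Unset Strict Implicit. Unset Printing Implicit Defensive.
Import Order.TTheory GRing.Theory Num.Theory.
Local Open Scope ring_scope.

Definition harm (n : nat) : rat := \sum_(1 <= k < n.+1) (k%:R)^-1.

(* Congruence modulo p in the ring Z_(p) of rationals with denominator
   prime to p: x == y (mod p) iff x - y = p * z with z in Z_(p).
   With x - y in lowest terms (numq / denq coprime), for prime p this means
   p divides the numerator and does not divide the denominator. *)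
Definition ratmod (p : nat) (x y : rat) : Prop :=
  ((p%:Z %| numq (x - y))%Z) /\ ~~ ((p%:Z %| denq (x - y))%Z).

From mathcomp Require Import all_boot all_order all_algebra.
From mathcomp Require Import ring zify.
Import GRing.Theory Num.Theory.
Local Open Scope ring_scope.

(* Both sides are p-integral, so the congruence holds as soon as their images
   in F_p agree.  There, with x_k = 1/k, both sides are polynomial expressions
   in x_1, ..., x_{p-1}, and the proof has three parts:
   1. An identity valid in every commutative ring, for any sequence x:
        \sum_k (x_1 + .. + x_k)^2 x_k^2 + \sum_{i<j<k} x_i x_j^2 x_k
          = P_1 * \sum_j s_j x_j^2 + \sum_k s_k x_k^3 + P_4
      where s_k = x_1 + .. + x_{k-1} and P_e = \sum_k x_k^e (sums below m).
   2. Vanishing in F_p: the power sums \sum_{k<p} k^-e vanish for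
      0 < e < p - 1 (a fact about any finite field), which kills P_1 and P_4;
      the symmetry x_{p-k} = - x_k then gives 2 \sum_k s_k x_k^3 = - P_4 = 0.
   3. Reduction modulo p: the partial map rat -> F_p, defined on rationals
      with denominator prime to p, is compatible with ring operations and
      finite sums, so it carries both sides to the expressions of part 1. *)

Section KeyIdentity.
Context {R : comNzRingType} (x : nat -> R).

Definition prefix m := \sum_(1 <= k < m) x k.
Definition pow4_sum m := \sum_(1 <= k < m) x k ^+ 4.
Definition harm_sq_sum m :=
  \sum_(1 <= k < m) (\sum_(1 <= a < k.+1) x a) ^+ 2 * x k ^+ 2.
Definition triple_sum m :=
  \sum_(1 <= i < m) \sum_(i.+1 <= j < m) \sum_(j.+1 <= k < m) x i * x j ^+ 2 * x k.
Definition pair_sum m := \sum_(1 <= i < m) \sum_(i.+1 <= j < m) x i * x j ^+ 2.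
Definition prefix_weighted e m := \sum_(1 <= k < m) prefix k * x k ^+ e.

Lemma pair_sumS m : pair_sum m.+1 = pair_sum m + prefix m * x m ^+ 2.
Proof.
case: m => [|m]; first by rewrite /pair_sum /prefix !big_geq // mul0r addr0.
rewrite /pair_sum big_nat_recr //= (big_geq (m := m.+2)) // addr0.
rewrite /prefix mulr_suml -big_split /=.
by apply: eq_big_nat => i /andP[_ lt_im]; rewrite big_nat_recr.
Qed.

Lemma pair_sumE m : pair_sum m = prefix_weighted 2 m.
Proof.
elim: m => [|m IH]; first by rewrite /pair_sum /prefix_weighted !big_geq.
rewrite pair_sumS IH; case: m {IH} => [|m].
  by rewrite /prefix_weighted /prefix !big_geq // mul0r addr0.
by rewrite /prefix_weighted [in RHS]big_nat_recr.
Qed.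

Lemma triple_sumS m : triple_sum m.+1 = triple_sum m + pair_sum m * x m.
Proof.
case: m => [|m]; first by rewrite /triple_sum /pair_sum !big_geq // mul0r addr0.
rewrite /triple_sum big_nat_recr //= (big_geq (m := m.+2)) // addr0.
rewrite /pair_sum mulr_suml -big_split /=.
apply: eq_big_nat => i /andP[_ lt_im].
rewrite big_nat_recr //= (big_geq (m := m.+2)) // addr0 mulr_suml -big_split /=.
by apply: eq_big_nat => j /andP[_ lt_jm]; rewrite big_nat_recr.
Qed.

Lemma key_identity m :
  harm_sq_sum m + triple_sum m =
  prefix m * prefix_weighted 2 m + prefix_weighted 3 m + pow4_sum m.
Proof.
elim: m => [|m IH].
  by rewrite /harm_sq_sum /triple_sum /prefix /prefix_weighted /pow4_sum
    !big_geq // mul0r !addr0.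
rewrite triple_sumS pair_sumE; case: m IH => [|m] IH.
  by rewrite /harm_sq_sum /triple_sum /prefix /prefix_weighted /pow4_sum
    !big_geq // !mul0r !addr0.
have -> : harm_sq_sum m.+2 =
    harm_sq_sum m.+1 + (prefix m.+1 + x m.+1) ^+ 2 * x m.+1 ^+ 2.
  by rewrite /harm_sq_sum big_nat_recr //= /prefix [in X in X ^+ 2]big_nat_recr.
have weightedS e : prefix_weighted e m.+2 =
    prefix_weighted e m.+1 + prefix m.+1 * x m.+1 ^+ e.
  by rewrite /prefix_weighted big_nat_recr.
have -> : pow4_sum m.+2 = pow4_sum m.+1 + x m.+1 ^+ 4 by rewrite /pow4_sum big_nat_recr.
have -> : prefix m.+2 = prefix m.+1 + x m.+1 by rewrite /prefix big_nat_recr.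
rewrite !weightedS -[harm_sq_sum m.+1](addrK (triple_sum m.+1)) IH.
ring.
Qed.

Lemma prefix_reflect n :
    (forall k, (0 < k < n)%N -> x (n - k) = - x k) -> prefix n = 0 ->
  forall k, (k < n)%N -> prefix k.+1 = prefix (n - k).
Proof.
move=> x_anti pre_n; elim=> [|k IH] lt_kn; first by rewrite subn0 pre_n /prefix big_geq.
rewrite /prefix big_nat_recr //= -/(prefix k.+1) IH; last by lia.
have -> : (n - k = (n - k.+1).+1)%N by lia.
rewrite /prefix big_nat_recr /=; last by lia.
by rewrite x_anti ?subrK //; lia.
Qed.

(* Under the same hypotheses, reversing the summation in \sum_k s_k x_k^3
   gives 2 \sum_k s_k x_k^3 = - P_4. *)
Lemma prefix_weighted3_reflect n :
    (forall k, (0 < k < n)%N -> x (n - k) = - x k) -> prefix n = 0 ->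
  2 * prefix_weighted 3 n = - pow4_sum n.
Proof.
move=> x_anti pre_n.
have reversed : prefix_weighted 3 n = - prefix_weighted 3 n - pow4_sum n.
  rewrite {1}/prefix_weighted big_nat_rev /=.
  rewrite (eq_big_nat _ _ (F2 := fun k => - (prefix k * x k ^+ 3 + x k ^+ 4))).
    by rewrite sumrN big_split /= opprD.
  move=> k /andP[k_gt0 k_le_n].
  have -> : (1 + n - k.+1 = n - k)%N by lia.
  rewrite x_anti ?k_gt0 ?k_le_n // -(@prefix_reflect n x_anti pre_n); last by lia.
  by rewrite /prefix big_nat_recr //=; ring.
by rewrite mulr2n mulrDl mul1r {1}reversed; ring.
Qed.

End KeyIdentity.

(* In a finite field F, \sum_y y^e = 0 for 0 < e < |F| - 1: some nonzero g
   has g^e != 1 (X^e - 1 has at most e roots), and the sum is invariant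
   under the substitution y -> g y. *)
Lemma sum_pow_finField (F : finFieldType) e :
  (0 < e < #|F|.-1)%N -> \sum_(y : F) y ^+ e = 0.
Proof.
move=> /andP[e_gt0 e_small].
have [g g_neq0 ge_neq1] : exists2 g : F, g != 0 & g ^+ e != 1.
  apply/exists_inP; apply: contraLR e_small => /exists_inPn all_roots.
  rewrite -leqNgt -(cardC1 (0 : F)) cardE.
  apply: max_unity_roots; rewrite ?enum_uniq //.
  by apply/allP => y; rewrite mem_enum unity_rootE => /all_roots /negPn.
set S := \sum_(y : F) y ^+ e.
have S_scaled : S = g ^+ e * S.
  rewrite {1}/S (reindex_inj (mulfI g_neq0)) /= /S mulr_sumr.
  by apply: eq_bigr => y _; rewrite exprMn.
apply/eqP; move/eqP: S_scaled; rewrite -subr_eq0 -{1}[S]mul1r -mulrBl mulf_eq0.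
by rewrite subr_eq0 eq_sym (negPf ge_neq1).
Qed.

Lemma sum_Fp_nat p (hp : prime p) (f : 'F_p -> 'F_p) : f 0 = 0 ->
  \sum_(y : 'F_p) f y = \sum_(1 <= k < p) f k%:R.
Proof.
move=> f0.
rewrite (eq_bigr (fun y : 'F_p => f (nat_of_ord y)%:R)); last by move=> y _; rewrite natr_Zp.
rewrite -(big_mkord xpredT (fun k => f k%:R)).
have sum_range n m (g : nat -> 'F_p) :
  n = m -> \sum_(0 <= k < n) g k = \sum_(0 <= k < m) g k by move->.
rewrite (sum_range _ p _ (Fp_cast hp)).
by rewrite big_ltn ?prime_gt0 // f0 add0r.
Qed.

Lemma sum_inv_pow_Fp p (hp : prime p) e : (0 < e < p.-1)%N ->
  \sum_(1 <= k < p) ((k%:R : 'F_p)^-1) ^+ e = 0.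
Proof.
move=> e_range.
rewrite -(@sum_Fp_nat p hp (fun y => y^-1 ^+ e)); last first.
  by rewrite invr0 expr0n; case: e e_range.
rewrite (reindex_inj invr_inj) /=.
under eq_bigr do rewrite invrK.
by apply: sum_pow_finField; rewrite card_Fp.
Qed.

Definition inv_Fp p k : 'F_p := (k%:R)^-1.

Lemma inv_Fp_reflect {p} (hp : prime p) k :
  (0 < k < p)%N -> inv_Fp p (p - k) = - inv_Fp p k.
Proof.
by move=> /andP[_ /ltnW le_kp]; rewrite /inv_Fp natrB // pchar_Fp_0 // sub0r invrN.
Qed.

(* The identity behind Lemma 2.8, in F_p: with x_k = 1/k,
   \sum_k H_k^2 x_k^2 + \sum_{i<j<k} x_i x_j^2 x_k = 0.  In the key identity,
   P_1 and P_4 vanish by the power-sum lemma, hence so does \sum_k s_k x_k^3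
   by reflection (2 is invertible since p is odd). *)
Lemma harm_sq_add_triple_Fp p (hp : prime p) : (7 <= p)%N ->
  harm_sq_sum (inv_Fp p) p + triple_sum (inv_Fp p) p = 0.
Proof.
move=> h7; rewrite key_identity.
have pre_p : prefix (inv_Fp p) p = 0.
  by rewrite -(@sum_inv_pow_Fp p hp 1); [apply: eq_bigr => k _; rewrite expr1 | lia].
have pow4_p : pow4_sum (inv_Fp p) p = 0 by apply: sum_inv_pow_Fp => //; lia.
have two_neq0 : (2 : 'F_p) != 0.
  by rewrite -(dvdn_pcharf (pchar_Fp hp)); apply: contraTN h7 => /dvdn_leq; lia.
have w3_p : prefix_weighted (inv_Fp p) 3 p = 0.
  have : 2 * prefix_weighted (inv_Fp p) 3 p = - pow4_sum (inv_Fp p) p.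
    exact: prefix_weighted3_reflect (inv_Fp_reflect hp) pre_p.
  by rewrite pow4_p oppr0 => /eqP; rewrite mulf_eq0 (negPf two_neq0) => /eqP.
by rewrite pre_p w3_p pow4_p mul0r !addr0.
Qed.

Definition p_integral p (q : rat) := ~~ (p%:Z %| denq q)%Z.
(* The image in F_p of q = numq q / denq q (meaningful when q is p-integral). *)
Definition reduce p (q : rat) : 'F_p := (numq q)%:~R / (denq q)%:~R.
Definition reduces p (q : rat) (y : 'F_p) := p_integral p q /\ reduce p q = y.

Section Reduction.
Context {p : nat} (hp : prime p).

Lemma int_Fp_eq0 (z : int) : ((z%:~R : 'F_p) == 0) = (p%:Z %| z)%Z.
Proof.
rewrite dvdzE; case: z => n /=; first by rewrite -(dvdn_pcharf (pchar_Fp hp)).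
by rewrite NegzE rmorphN oppr_eq0 /= -(dvdn_pcharf (pchar_Fp hp)).
Qed.

Lemma not_dvdzM {a b : int} :
  ~~ (p%:Z %| a)%Z -> ~~ (p%:Z %| b)%Z -> ~~ (p%:Z %| a * b)%Z.
Proof. by rewrite !dvdzE abszM Euclid_dvdM // => /negPf-> /negPf->. Qed.

(* Any fraction n / d with p not dividing d reduces to n / d in F_p: the
   reduced denominator of n / d divides d. *)
Lemma reduces_frac (n d : int) : ~~ (p%:Z %| d)%Z ->
  reduces p (n%:~R / d%:~R) (n%:~R / d%:~R).
Proof.
move=> p_ndvd_d.
have d_neq0 : d != 0 by apply: contraNneq p_ndvd_d => ->; rewrite dvdz0.
set q := n%:~R / d%:~R.
have cross : numq q * d = n * denq q.
  apply: (@intr_inj rat); rewrite !intrM numqE /q.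
  have : (d%:~R : rat) != 0 by rewrite intr_eq0.
  by move=> ?; field.
have den_dvd : (denq q %| d)%Z.
  have : (denq q %| numq q * d)%Z by rewrite cross dvdz_mull.
  by rewrite Gauss_dvdzr // /coprimez /gcdz gcdnC; apply: coprime_num_den.
have q_int : p_integral p q by apply: contra p_ndvd_d => /dvdz_trans; apply.
split=> //; apply/eqP.
have dF : (d%:~R : 'F_p) != 0 by rewrite int_Fp_eq0.
have qF : ((denq q)%:~R : 'F_p) != 0 by rewrite int_Fp_eq0.
by rewrite /reduce eqr_div // -!intrM cross mulrC.
Qed.

Lemma reduces_int (z : int) : reduces p z%:~R z%:~R.
Proof.
have p_ndvd1 : ~~ (p%:Z %| 1)%Z by rewrite dvdzE /= dvdn1 neq_ltn prime_gt1 ?orbT.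
by have := reduces_frac z 1 p_ndvd1; rewrite !divr1.
Qed.

Lemma reduces_den {q : rat} : p_integral p q -> ((denq q)%:~R : 'F_p) != 0.
Proof. by rewrite int_Fp_eq0. Qed.

Lemma reducesD {a b y z} :
  reduces p a y -> reduces p b z -> reduces p (a + b) (y + z).
Proof.
move=> [pa <-] [pb <-].
have da := reduces_den pa; have db := reduces_den pb.
have fracD : a + b = (numq a * denq b + numq b * denq a)%:~R / (denq a * denq b)%:~R.
  rewrite -{1}[a]divq_num_den -{1}[b]divq_num_den rmorphD !intrM /=.
  have := denq_neq0 a; have := denq_neq0 b.
  rewrite -(intr_eq0 rat (denq a)) -(intr_eq0 rat (denq b)) => ? ?.
  by field; apply/andP.
have [? frac_red] := reduces_frac (numq a * denq b + numq b * denq a) _ (not_dvdzM pa pb).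
rewrite fracD; split=> //; rewrite frac_red /reduce rmorphD !intrM /=.
by field; apply/andP.
Qed.

Lemma reducesM {a b y z} :
  reduces p a y -> reduces p b z -> reduces p (a * b) (y * z).
Proof.
move=> [pa <-] [pb <-].
have da := reduces_den pa; have db := reduces_den pb.
have fracM : a * b = (numq a * numq b)%:~R / (denq a * denq b)%:~R.
  rewrite -{1}[a]divq_num_den -{1}[b]divq_num_den !intrM /=.
  have := denq_neq0 a; have := denq_neq0 b.
  rewrite -(intr_eq0 rat (denq a)) -(intr_eq0 rat (denq b)) => ? ?.
  by field; apply/andP.
have [? frac_red] := reduces_frac (numq a * numq b) _ (not_dvdzM pa pb).
rewrite fracM; split=> //; rewrite frac_red /reduce !intrM /=.
by field; apply/andP.
Qed.

Lemma reducesN {a y} : reduces p a y -> reduces p (- a) (- y).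
Proof. by move=> [pa <-]; rewrite /reduces /p_integral /reduce denqN numqN rmorphN mulNr. Qed.

Lemma reducesX {a y} n : reduces p a y -> reduces p (a ^+ n) (y ^+ n).
Proof.
move=> ra; elim: n => [|n IH]; first by have := reduces_int 1; rewrite !expr0.
by rewrite !exprSr; apply: reducesM.
Qed.

Lemma reduces_sum m n (F : nat -> rat) (G : nat -> 'F_p) :
    (forall i, (m <= i < n)%N -> reduces p (F i) (G i)) ->
  reduces p (\sum_(m <= i < n) F i) (\sum_(m <= i < n) G i).
Proof.
move=> FG; rewrite !big_seq; apply: big_ind2 => [|a y b z|i].
- by have := reduces_int 0; rewrite !mulr0z.
- exact: reducesD.
- by rewrite mem_index_iota; apply: FG.
Qed.

Lemma reduces_inv_nat k : (0 < k < p)%N -> reduces p (k%:R^-1) (inv_Fp p k).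
Proof.
move=> /andP[k_gt0 k_ltp].
have p_ndvd_k : ~~ (p%:Z %| k%:Z)%Z by rewrite dvdzE /= gtnNdvd.
by have := reduces_frac 1 k p_ndvd_k; rewrite !mul1r.
Qed.

Lemma ratmod_reduces {a b} y : reduces p a y -> reduces p b y -> ratmod p a b.
Proof.
move=> ra rb; have [pab] := reducesD ra (reducesN rb).
rewrite subrr /reduce => /eqP; rewrite mulf_eq0 invr_eq0 !int_Fp_eq0.
by move: (pab); rewrite /p_integral => /negPf ->; rewrite orbF.
Qed.

End Reduction.

Theorem lemma2p8 (p : nat) (hp : prime p) (h7 : (7 <= p)%N) :
  ratmod p
    (\sum_(1 <= k < p) (harm k) ^+ 2 / (k%:R) ^+ 2)
    (- \sum_(1 <= i < p) \sum_(i.+1 <= j < p) \sum_(j.+1 <= k < p)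
         ((i%:R : rat) * (j%:R) ^+ 2 * k%:R)^-1).
Proof.
have red_inv k : (0 < k < p)%N -> reduces p (k%:R^-1) (inv_Fp p k).
  exact: reduces_inv_nat.
apply: (ratmod_reduces hp (harm_sq_sum (inv_Fp p) p)).
  apply: (reduces_sum hp) => k /andP[k_gt0 k_ltp]; rewrite -exprVn.
  apply: (reducesM hp); apply: (reducesX hp); last by apply: red_inv; lia.
  by apply: (reduces_sum hp) => a ?; apply: red_inv; lia.
have /eqP : harm_sq_sum (inv_Fp p) p + triple_sum (inv_Fp p) p = 0.
  exact: harm_sq_add_triple_Fp.
rewrite addr_eq0 => /eqP ->; apply: reducesN.
do 3!(apply: (reduces_sum hp) => ? ?); rewrite 2!invfM -exprVn.
apply: (reducesM hp); last by apply: red_inv; lia.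
apply: (reducesM hp); last by apply: (reducesX hp); apply: red_inv; lia.
by apply: red_inv; lia.
Qed.
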